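(* With notation as in the context, for every $i\in\mathbb Z$ the set $\mathcal B_i$ is a self-adjoint ideal of $\mathcal B_0$, the maps $\varphi_i\colon\mathcal B_{-i}\to\mathcal B_i$, $\varphi_i(b)=s^ib\,s^{-i}$, are $*$-isomorphisms, and $\varphi=(\{\mathcal B_i\},\{\varphi_i\})$ is a partial action of $\mathbb Z$ on $\mathcal B_0$. Moreover $\mathcal B=\bigoplus_{i\in\mathbb Z}\mathcal B_it^i$, and the map $$\Psi\colon\mathcal B_0\rtimes_\varphi\mathbb Z\to\mathcal B,\qquad \Psi\Big(\sum_ib_i\delta_i\Big)=\sum_ib_is^i=\sum_ib_it^i\quad(b_i\in\mathcal B_i)$$ is a $*$-isomorphism.
   Context: Let $X$ be a totally disconnected compact metrizable space, $T$ a homeomorphism of $X$, $K$ a field with involution, $C_K(X)$ the $*$-algebra of locally constant functions $X\to K$, and $\mathcal A=C_K(X)\rtimes_T\mathbb Z$ the algebraic crossed product (finite sums $\sum f_it^i$, $tf=(f\circ T^{-1})t$, $(ft^i)^*=t^{-i}f^*$, $t^{-1}=t^*$). Let $E$ be a nonempty clopen set, $\mathcal P$ a partition of $X\setminus E$ (finite family of nonempty pairwise disjoint clopen sets with union $X\setminus E$), $\mathcal B$ the unital $*$-subalgebra of $\mathcal A$ generated by $\{\chi_Zt:Z\in\mathcal P\}$, and $\mathcal B_0=C_K(X)\cap\mathcal B$. Put $s=\chi_{X\setminus E}t$, $s^0=1$, and for $i>0$, $s^{-i}:=(t^{-1}\chi_{X\setminus E})^i=(s^* )^i$. For $i>0$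 let $\mathcal B_i=\chi_{X\setminus(E\cup T(E)\cup\cdots\cup T^{i-1}(E))}\mathcal B_0$ and $\mathcal B_{-i}=\chi_{X\setminus(T^{-1}(E)\cup\cdots\cup T^{-i}(E))}\mathcal B_0$. A partial action of $\mathbb Z$ on a $*$-algebra $A$ is a family of self-adjoint ideals $A_n$ ($A_0=A$) and $*$-isomorphisms $\phi_n\colon A_{-n}\to A_n$ with $\phi_0=\mathrm{id}$ and $\phi_{n+m}$ extending $\phi_n\circ\phi_m$ (on its natural domain). The partial crossed product $A\rtimes_\phi\mathbb Z$ is the $*$-algebra of finite sums $\sum_na_n\delta_n$, $a_n\in A_n$, with product $(a_n\delta_n)(b_m\delta_m)=\phi_n(\phi_{-n}(a_n)b_m)\delta_{n+m}$ and involution $(a_n\delta_n)^*=\phi_{-n}(a_n^* )\delta_{-n}$. *)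

From HB Require Import structures.
From mathcomp Require Import all_boot all_order all_algebra.
From Stdlib Require Import ClassicalEpsilon.
From Stdlib Require Rdefinitions.

Set Implicit Arguments.
Unset Strict Implicit.
Unset Printing Implicit Defensive.
Import GRing.Theory.
Local Open Scope ring_scope.

Record topology (X : Type) := Topology {
  is_open : (X -> Prop) -> Prop;
  open_setT : is_open (fun _ => True);
  open_setI : forall U V, is_open U -> is_open V -> is_open (fun x => U x /\ V x);
  open_bigU : forall (I : Type) (F : I -> X -> Prop),
      (forall i, is_open (F i)) -> is_open (fun x => exists i, F i x)
}.

Section Topology.
Variables (X : Type) (tau : topology X).

Definition clopen (U : X -> bool) : Prop :=
  is_open tau (fun x => U x) /\ is_open tau (fun x => ~~ U x).

Definition compact_space : Prop :=
  forall (I : Type) (F : I -> X -> Prop), (forall i, is_open tau (F i)) ->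
  (forall x, exists i, F i x) ->
  exists (m : nat) (g : nat -> I), forall x, exists k, (k < m)%N /\ F (g k) x.

Definition connected_subset (S : X -> Prop) : Prop :=
  ~ (exists U V, is_open tau U /\ is_open tau V /\
       (forall x, S x -> U x \/ V x) /\
       (exists x, S x /\ U x) /\ (exists x, S x /\ V x) /\
       (forall x, S x -> U x -> V x -> False)).

Definition totally_disconnected : Prop :=
  forall S, connected_subset S -> forall x y, S x -> S y -> x = y.

Definition is_metric (d : X -> X -> Rdefinitions.R) : Prop :=
  (forall x y, Rdefinitions.Rle Rdefinitions.R0 (d x y)) /\
  (forall x y, d x y = Rdefinitions.R0 <-> x = y) /\
  (forall x y, d x y = d y x) /\
  (forall x y z, Rdefinitions.Rle (d x z) (Rdefinitions.Rplus (d x y) (d y z))).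

Definition metrizable : Prop :=
  exists d, is_metric d /\
    forall U, is_open tau U <->
      (forall x, U x -> exists eps, Rdefinitions.Rlt Rdefinitions.R0 eps /\
                                   forall y, Rdefinitions.Rlt (d x y) eps -> U y).

Definition continuous (f : X -> X) : Prop :=
  forall U, is_open tau U -> is_open tau (fun x => U (f x)).

Definition homeomorphism (T Tinv : X -> X) : Prop :=
  cancel T Tinv /\ cancel Tinv T /\ continuous T /\ continuous Tinv.

Definition is_partition (E : X -> bool) (n : nat) (P : 'I_n -> X -> bool) : Prop :=
  (forall j, clopen (P j)) /\ (forall j, exists x, P j x) /\
  (forall j k x, P j x -> P k x -> j = k) /\
  (forall x, ~~ E x = [exists j, P j x]).

End Topology.

Definition field_involution (K : fieldType) (cj : K -> K) : Prop :=
  (forall a b, cj (a + b) = cj a + cj b) /\ (forall a b, cj (a * b) = cj a * cj b) /\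
  involutive cj.

(* An element  sum_i f_i t^i  is represented by its coefficient function *)
(* i |-> f_i  (type elt); it lies in A iff finitely many f_i are nonzero *)
(* and all f_i are locally constant.                                     *)
Section CrossedProduct.
Variables (X : Type) (tau : topology X) (K : fieldType) (cj : K -> K) (T Tinv : X -> X).

Definition locally_constant (f : X -> K) : Prop :=
  forall x, exists U, is_open tau U /\ U x /\ forall y, U y -> f y = f x.

Definition Tpow (i : int) (x : X) : X :=
  match i with Posz k => iter k T x | Negz k => iter k.+1 Tinv x end.

Definition chi (U : X -> bool) (x : X) : K := (U x)%:R.

(* sum over Z of a finitely supported family (0 if not finitely supported) *)
Definition zsum (g : int -> K) : K :=
  match excluded_middle_informative
          (exists N : nat, forall i : int, (N < absz i)%N -> g i = 0) with
  | left H => let N := proj1_sig (constructive_indefinite_description _ H) in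
              \sum_(k < (N.*2).+1) g (k%:Z - N%:Z)
  | right _ => 0
  end.

Definition elt := int -> X -> K.

Definition fin_supp (a : elt) : Prop :=
  exists N : nat, forall i : int, (N < absz i)%N -> forall x, a i x = 0.

Definition inA (a : elt) : Prop := fin_supp a /\ forall i, locally_constant (a i).

Definition eadd (a b : elt) : elt := fun i x => a i x + b i x.
Definition escale (c : K) (a : elt) : elt := fun i x => c * a i x.
Definition emono (f : X -> K) (i : int) : elt := fun j x => if j == i then f x else 0.
Definition eone : elt := emono (fun _ => 1) 0.
(* (f t^i)(g t^j) = f (g o T^-i) t^(i+j) *)
Definition emul (a b : elt) : elt :=
  fun n x => zsum (fun i => a i x * b (n - i) (Tpow (- i) x)).
(* (f t^i)^* = t^-i f^* = (f^* o T^i) t^-i *)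
Definition estar (a : elt) : elt := fun n x => cj (a (- n) (Tpow (- n) x)).

Definition epow (a : elt) (k : nat) : elt := iter k (emul a) eone.

Definition fzero : X -> K := fun _ => 0.
Definition fadd (f g : X -> K) : X -> K := fun x => f x + g x.
Definition fscale (c : K) (f : X -> K) : X -> K := fun x => c * f x.
Definition fmul (f g : X -> K) : X -> K := fun x => f x * g x.
Definition fstar (f : X -> K) : X -> K := fun x => cj (f x).

Record star_ops (V : Type) := StarOps {
  op_add : V -> V -> V; op_scale : K -> V -> V; op_mul : V -> V -> V; op_star : V -> V }.

Definition fun_ops : star_ops (X -> K) := StarOps fadd fscale fmul fstar.
Definition elt_ops : star_ops elt := StarOps eadd escale emul estar.

Definition star_iso (V W : Type) (OV : star_ops V) (OW : star_ops W)
    (SV : V -> Prop) (SW : W -> Prop) (f : V -> W) : Prop :=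
  (forall v, SV v -> SW (f v)) /\
  (forall v1 v2, SV v1 -> SV v2 -> f v1 = f v2 -> v1 = v2) /\
  (forall w, SW w -> exists2 v, SV v & f v = w) /\
  (forall v1 v2, SV v1 -> SV v2 -> f (op_add OV v1 v2) = op_add OW (f v1) (f v2)) /\
  (forall c v, SV v -> f (op_scale OV c v) = op_scale OW c (f v)) /\
  (forall v1 v2, SV v1 -> SV v2 -> f (op_mul OV v1 v2) = op_mul OW (f v1) (f v2)) /\
  (forall v, SV v -> f (op_star OV v) = op_star OW (f v)).

Definition sa_ideal (A I : (X -> K) -> Prop) : Prop :=
  (forall f, I f -> A f) /\ I fzero /\
  (forall f g, I f -> I g -> I (fadd f g)) /\
  (forall c f, I f -> I (fscale c f)) /\
  (forall a f, A a -> I f -> I (fmul a f) /\ I (fmul f a)) /\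
  (forall f, I f -> I (fstar f)).

Definition partial_action (A : (X -> K) -> Prop) (D : int -> (X -> K) -> Prop)
    (phi : int -> (X -> K) -> (X -> K)) : Prop :=
  (forall f, D 0 f <-> A f) /\
  (forall i, sa_ideal A (D i)) /\
  (forall i, star_iso fun_ops fun_ops (D (- i)) (D i) (phi i)) /\
  (forall f, A f -> phi 0 f = f) /\
  (forall i j f, D (- j) f -> D (- i) (phi j f) ->
       D (- (i + j)) f /\ phi (i + j) f = phi i (phi j f)).

(* partial crossed product A x|_phi Z: sum_n a_n delta_n is represented by n |-> a_n *)
Definition inCP (D : int -> (X -> K) -> Prop) (a : elt) : Prop :=
  fin_supp a /\ forall i, D i (a i).
(* (a_n d_n)(b_m d_m) = phi_n(phi_-n(a_n) b_m) d_(n+m) *)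
Definition cp_mul (phi : int -> (X -> K) -> (X -> K)) (a b : elt) : elt :=
  fun k x => zsum (fun m => phi m (fmul (phi (- m) (a m)) (b (k - m))) x).
(* (a_n d_n)^* = phi_-n(a_n^* ) d_-n *)
Definition cp_star (phi : int -> (X -> K) -> (X -> K)) (a : elt) : elt :=
  fun k => phi k (fstar (a (- k))).
Definition cp_ops (phi : int -> (X -> K) -> (X -> K)) : star_ops elt :=
  StarOps eadd escale (cp_mul phi) (cp_star phi).

Variables (E : X -> bool) (n : nat) (P : 'I_n -> X -> bool).

Definition star_subalg_closed (S : elt -> Prop) : Prop :=
  (forall a, S a -> inA a) /\ S eone /\
  (forall a b, S a -> S b -> S (eadd a b)) /\
  (forall c a, S a -> S (escale c a)) /\
  (forall a b, S a -> S b -> S (emul a b)) /\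
  (forall a, S a -> S (estar a)).

Definition Bgen (g : elt) : Prop := exists j : 'I_n, g = emono (chi (P j)) 1.

Definition inB (a : elt) : Prop :=
  forall S, star_subalg_closed S -> (forall g, Bgen g -> S g) -> S a.

(* B_0 = C_K(X) /\ B  (a function f is identified with f t^0) *)
Definition B0 (f : X -> K) : Prop := locally_constant f /\ inB (emono f 0).

(* the set  X \ (E u T(E) u ... u T^(i-1)(E))  for i >= 0,
   and     X \ (T^-1(E) u ... u T^i(E))          for i < 0 *)
Definition domset (i : int) (x : X) : bool :=
  if (0 <= i) then [forall k : 'I_(absz i), ~~ E (Tpow (- (k%:Z)) x)]
  else [forall k : 'I_(absz i), ~~ E (Tpow ((k.+1)%:Z) x)].

Definition Bi (i : int) (f : X -> K) : Prop :=
  exists2 b, B0 b & f = fmul (chi (domset i)) b.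

(* s = chi_{X\E} t ; s^i, with s^-i = (s^* )^i *)
Definition s_elt : elt := emono (chi (fun x => ~~ E x)) 1.
Definition spow (i : int) : elt :=
  match i with Posz k => epow s_elt k | Negz k => epow (estar s_elt) k.+1 end.

Definition phiA (i : int) (a : elt) : elt := emul (emul (spow i) a) (spow (- i)).
Definition phi (i : int) (b : X -> K) : X -> K := phiA i (emono b 0) 0.

Definition Psi (a : elt) : elt := fun i => a i.

End CrossedProduct.

(* Everything reduces to a calculus of monomials f t^i.  Writing D_i for
   [domset i] (so that B_i = chi_(D_i) B_0), the cocycle identity
   D_(a+b) = D_a n T^a(D_b), valid for a, b of the same sign, gives
   s^i = chi_(D_i) t^i for every i in Z.  Hence phi_i(b) = chi_(D_i) (b o T^-i),
   an explicit partial *-automorphism of the algebra of all functions X -> K.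
   The crux is the description B_i = { f | f t^i in B and f = 0 off D_i },
   obtained by multiplying with s^i and s^-i.  It shows that the B_i are
   self-adjoint ideals of B_0 with B_i (B_j o T^-i) c B_(i+j), so the families
   with coefficients in the B_i form a unital *-subalgebra of A containing the
   generators chi_Z t (which lie in B_1) and contained in B: B = (+)_i B_i t^i.
   Finally Psi is the identity on coefficient families, and the product and
   involution of the partial crossed product agree with those of A because
   elements of B_i vanish off D_i. *)

From HB Require Import structures.
From mathcomp Require Import all_boot all_algebra zify.
From Stdlib Require Import FunctionalExtensionality ClassicalEpsilon.

Set Implicit Arguments.
Unset Strict Implicit.
Unset Printing Implicit Defensive.
Import GRing.Theory Num.Theory.
Local Open Scope ring_scope.

Section Iterates.
Variables (X : Type) (T Tinv : X -> X).
Hypotheses (TK : cancel T Tinv) (TinvK : cancel Tinv T).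
Local Notation Tp := (Tpow T Tinv).

Lemma TpowS i x : Tp (i + 1) x = T (Tp i x).
Proof.
case: i => [k|[|k]]; first by rewrite -PoszD addn1.
  by rewrite /= TinvK.
have -> : Negz k.+1 + 1 = Negz k by rewrite !NegzE; lia.
by rewrite /= TinvK.
Qed.

Lemma TpowB1 i x : Tp (i - 1) x = Tinv (Tp i x).
Proof. by rewrite -{2}(subrK 1 i) TpowS TK. Qed.

Lemma TpowD a b x : Tp (a + b) x = Tp a (Tp b x).
Proof.
elim/int_rec: a x => [|k IH|k IH] x; first by rewrite add0r.
  by rewrite -addn1 PoszD addrAC TpowS IH -TpowS.
by rewrite -addn1 PoszD opprD addrAC TpowB1 IH -TpowB1.
Qed.

Lemma TpowK i : cancel (Tp i) (Tp (- i)).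
Proof. by move=> x; rewrite -TpowD addNr. Qed.

Lemma TpowKV i : cancel (Tp (- i)) (Tp i).
Proof. by move=> x; rewrite -TpowD addrN. Qed.

Lemma continuous_Tpow (tau : topology X) i :
  continuous tau T -> continuous tau Tinv -> continuous tau (Tp i).
Proof.
have iterC f k : continuous tau f -> continuous tau (iter k f).
  by move=> hf; elim: k => [|k IH] U hU //=; apply: (IH (fun y => U (f y))); apply: hf.
by move=> hT hTinv; case: i => k; apply: iterC.
Qed.
End Iterates.

(* [between k i]: k ranges over [0, i) when i >= 0 and over [i, 0) when i < 0.
   The set D_i = domset i consists of the x with T^-k(x) outside E for all
   such k; this uniform description drives all computations with D_i. *)
Definition between (k i : int) : bool :=
  ((0 <= k) && (k < i)) || ((i <= k) && (k < 0)).

Section DomainSets.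
Variables (X : Type) (T Tinv : X -> X) (E : X -> bool).
Local Notation Tp := (Tpow T Tinv).
Local Notation D := (domset T Tinv E).

Lemma domsetP i x : reflect (forall k, between k i -> ~~ E (Tp (- k) x)) (D i x).
Proof.
rewrite /domset; case: i => m.
  rewrite le0z_nat /=; apply: (iffP forallP) => H.
    case=> [k|k] /=; rewrite /between; last by rewrite ?NegzE; lia.
    move=> Hk; have Hk' : (k < m)%N by lia.
    exact: (H (Ordinal Hk')).
  by move=> k; apply: H; rewrite /between ltz_nat ltn_ord.
have -> : (0 <= Negz m) = false by rewrite NegzE; lia.
apply: (iffP forallP) => H.
  case=> [k|k]; rewrite /between; first by rewrite NegzE; lia.
  move=> Hk; have Hk' : (k < m.+1)%N by move: Hk; rewrite !NegzE; lia.
  exact: (H (Ordinal Hk')).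
move=> k; have := H (Negz k); rewrite /between NegzE opprK.
by apply; have := ltn_ord k; lia.
Qed.

Hypotheses (TK : cancel T Tinv) (TinvK : cancel Tinv T).
Let TpowD := TpowD TK TinvK.

Lemma domset0 x : D 0 x.
Proof. by apply/domsetP => k; rewrite /between; lia. Qed.

Lemma domset1 x : D 1 x = ~~ E x.
Proof.
apply/domsetP/idP => [H|H k]; first exact: H 0 isT.
by rewrite /between => hk; have -> : k = 0 by lia.
Qed.

Lemma domsetT i x : D i (Tp i x) = D (- i) x.
Proof.
apply/domsetP/domsetP => H k Hk.
  have := H (k + i) _; rewrite -TpowD //.
  have -> : - (k + i) + i = - k by lia.
  by apply; move: Hk; rewrite /between; lia.
rewrite -TpowD; have := H (k - i) _; have -> : - (k - i) = - k + i by lia.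
by apply; move: Hk; rewrite /between; lia.
Qed.

Lemma domsetN1 x : D (-1) x = ~~ E (T x).
Proof. by rewrite -domsetT domset1. Qed.

Lemma domsetD_sub a b x : D a x -> D b (Tp (- a) x) -> D (a + b) x.
Proof.
move=> /domsetP Ha /domsetP Hb; apply/domsetP => k Hk.
have [Hka|Hka] := boolP (between k a); first exact: Ha.
have := Hb (k - a) _; rewrite -TpowD.
have -> : - (k - a) + - a = - k by lia.
by apply; move: Hk Hka; rewrite /between; lia.
Qed.

Lemma domsetD a b x : ((0 <= a) && (0 <= b)) || ((a <= 0) && (b <= 0)) ->
  D (a + b) x = D a x && D b (Tp (- a) x).
Proof.
move=> Hs; apply/idP/andP => [/domsetP H|[]]; last exact: domsetD_sub.
split; apply/domsetP => k Hk.
  by apply: H; move: Hs Hk; rewrite /between; lia.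
rewrite -TpowD; have := H (k + a) _.
have -> : - (k + a) = - k + - a by lia.
by apply; move: Hs Hk; rewrite /between; lia.
Qed.
End DomainSets.

Section WindowSums.
Variable K : fieldType.

Definition wsum (N : nat) (g : int -> K) : K :=
  \sum_(k < (N.*2).+1) g (k%:Z - N%:Z).

Lemma wsum_widen N M g : (forall i, (N < absz i)%N -> g i = 0) -> (N <= M)%N ->
  wsum M g = wsum N g.
Proof.
move=> H; elim: M => [|M IH]; first by rewrite leqn0 => /eqP ->.
rewrite leq_eqVlt => /orP [/eqP <- //|HM]; rewrite -IH //.
rewrite /wsum doubleS big_ord_recl big_ord_recr /= sub0r H; last by lia.
rewrite add0r H /bump /=; last by lia.
by rewrite addr0; apply: eq_bigr => i _ /=; congr g; rewrite /bump /=; lia.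
Qed.

Lemma zsum_eq N g : (forall i, (N < absz i)%N -> g i = 0) -> zsum g = wsum N g.
Proof.
move=> H; rewrite /zsum; case: excluded_middle_informative => [h|[]]; last by exists N.
case: constructive_indefinite_description => N' HN' /=.
rewrite -/(wsum N' g) -(wsum_widen (M := maxn N N') H) ?leq_maxl //.
by rewrite (wsum_widen HN') // leq_maxr.
Qed.

Lemma wsum_single N i0 (c : K) :
  wsum N (fun k => if k == i0 then c else 0) = if (absz i0 <= N)%N then c else 0.
Proof.
rewrite /wsum; case: ifP => Hi; last first.
  by rewrite big1 // => k _; rewrite ifF //; apply/eqP => Hk; have := ltn_ord k; lia.
have Hk : (absz (i0 + N%:Z)%R < (N.*2).+1)%N by lia.
rewrite (bigD1 (Ordinal Hk)) //= big1 ?addr0; first by rewrite ifT //; apply/eqP; lia.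
move=> k /eqP Hk'; rewrite ifF //; apply/eqP => Hk2; apply: Hk'.
by apply: val_inj => /=; lia.
Qed.

Lemma zsum_single i0 (g : int -> K) : (forall k, k != i0 -> g k = 0) -> zsum g = g i0.
Proof.
move=> H; rewrite (zsum_eq (N := absz i0)); last first.
  by move=> i Hi; apply: H; apply/eqP => Ei; move: Hi; rewrite Ei; lia.
rewrite (_ : wsum _ g = wsum (absz i0) (fun k => if k == i0 then g i0 else 0)).
  by rewrite wsum_single leqnn.
by apply: eq_bigr => k _; case: eqP => [->//|/eqP]; exact: H.
Qed.
End WindowSums.

Section Involution.
Variables (K : fieldType) (cj : K -> K).
Hypotheses (cjD : forall a b, cj (a + b) = cj a + cj b)
  (cjM : forall a b, cj (a * b) = cj a * cj b) (cjK : involutive cj).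

Lemma cj0 : cj 0 = 0.
Proof. by apply: (addrI (cj 0)); rewrite -cjD !addr0. Qed.

Lemma cj1 : cj 1 = 1.
Proof.
have : cj 1 * (cj 1 - 1) = 0 by rewrite mulrBr mulr1 -cjM mulr1 subrr.
move/eqP; rewrite mulf_eq0 subr_eq0 => /orP [/eqP h|/eqP //].
by move: (cjK 1); rewrite h cj0 => /eqP; rewrite eq_sym oner_eq0.
Qed.

Lemma cj_bool (b : bool) : cj b%:R = b%:R.
Proof. by case: b; rewrite ?cj0 ?cj1. Qed.
End Involution.

Lemma natr_andb (K : fieldType) (a b : bool) : ((a && b)%:R : K) = a%:R * b%:R.
Proof. by case: a; case: b; rewrite ?mulr0 ?mulr1. Qed.

Section Monomials.
Variables (X : Type) (K : fieldType) (cj : K -> K) (T Tinv : X -> X).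
Hypothesis cjD : forall a b, cj (a + b) = cj a + cj b.
Local Notation Tp := (Tpow T Tinv).
Local Notation M := (@emono X K).

Definition ezero : elt X K := fun _ _ => 0.

Lemma emono_ext f g i : (forall x, f x = g x) -> M f i = M g i.
Proof. by move=> h; rewrite (functional_extensionality _ _ h). Qed.

Lemma emonoM f g i j :
  emul T Tinv (M f i) (M g j) = M (fun x => f x * g (Tp (- i) x)) (i + j).
Proof.
apply: functional_extensionality => m; apply: functional_extensionality => x.
rewrite /emul (zsum_single (i0 := i)); last first.
  by move=> k /negbTE hk; rewrite /emono hk mul0r.
rewrite /emono eqxx (_ : (m - i == j) = (m == i + j)); last by apply/eqP/eqP; lia.
by case: ifP; rewrite ?mulr0.
Qed.

Lemma emonoV f i : estar cj T Tinv (M f i) = M (fun x => cj (f (Tp i x))) (- i).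
Proof.
apply: functional_extensionality => m; apply: functional_extensionality => x.
rewrite /estar /emono (_ : (- m == i) = (m == - i)); last by apply/eqP/eqP; lia.
by case: eqP => [->|_]; rewrite ?opprK ?cj0.
Qed.

Lemma emonoD f g i : eadd (M f i) (M g i) = M (fadd f g) i.
Proof.
do 2!apply: functional_extensionality => ?.
by rewrite /eadd /emono /fadd; case: ifP; rewrite ?addr0.
Qed.

Lemma emonoZ c f i : escale c (M f i) = M (fscale c f) i.
Proof.
do 2!apply: functional_extensionality => ?.
by rewrite /escale /emono /fscale; case: ifP; rewrite ?mulr0.
Qed.

Lemma emono0 i : M (fun _ => 0) i = ezero.
Proof.
do 2!apply: functional_extensionality => ?.
by rewrite /emono; case: ifP.
Qed.

Lemma escale0 a : escale 0 a = ezero.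
Proof.
do 2!apply: functional_extensionality => ?.
by rewrite /escale mul0r.
Qed.

Lemma elt_monomial_sum (a : elt X K) N :
  (forall i, (N < absz i)%N -> forall x, a i x = 0) ->
  a = fun m x => \sum_(k <- index_enum 'I_(N.*2).+1) M (a (k%:Z - N%:Z)) (k%:Z - N%:Z) m x.
Proof.
move=> hN; apply: functional_extensionality => m; apply: functional_extensionality => x.
rewrite -[RHS]/(wsum N (fun k => M (a k) k m x)).
rewrite (_ : wsum N _ = wsum N (fun k => if k == m then a m x else 0)).
  by rewrite wsum_single; case: leqP => // hm; rewrite hN.
by apply: eq_bigr => k _; rewrite /emono eq_sym; case: eqP => [->|].
Qed.
End Monomials.

Definition supported_on (X : Type) (K : fieldType) (U : X -> bool) (f : X -> K) : Prop :=
  forall x, ~~ U x -> f x = 0.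

Lemma supported_mul_chi (X : Type) (K : fieldType) (U : X -> bool) (f : X -> K) x :
  supported_on U f -> f x * chi K U x = f x.
Proof. by move=> hf; rewrite /chi; case hx: (U x); rewrite ?mulr1 // hf ?hx ?mul0r. Qed.

Section FiniteSupport.
Variables (X : Type) (K : fieldType) (cj : K -> K) (T Tinv : X -> X).
Hypothesis cjD : forall a b, cj (a + b) = cj a + cj b.
Local Notation Tp := (Tpow T Tinv).

Lemma fin_supp_eadd (a b : elt X K) : fin_supp a -> fin_supp b -> fin_supp (eadd a b).
Proof.
move=> [Na ha] [Nb hb]; exists (maxn Na Nb) => k hk x.
by rewrite /eadd ha ?hb ?addr0 //; lia.
Qed.

Lemma fin_supp_escale c (a : elt X K) : fin_supp a -> fin_supp (escale c a).
Proof. by move=> [Na ha]; exists Na => k hk x; rewrite /escale ha ?mulr0. Qed.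

Lemma fin_supp_estar (a : elt X K) : fin_supp a -> fin_supp (estar cj T Tinv a).
Proof. by move=> [Na ha]; exists Na => k hk x; rewrite /estar ha ?cj0 //; lia. Qed.

Lemma emul_wsum N (a b : elt X K) m x :
  (forall k, (N < absz k)%N -> forall x, a k x = 0) ->
  emul T Tinv a b m x = wsum N (fun k => a k x * b (m - k) (Tp (- k) x)).
Proof. by move=> h; rewrite /emul (zsum_eq (N := N)) // => i /h ->; rewrite mul0r. Qed.

Lemma fin_supp_emul (a b : elt X K) : fin_supp a -> fin_supp b -> fin_supp (emul T Tinv a b).
Proof.
move=> [Na ha] [Nb hb]; exists (Na + Nb)%N => m hm x.
have hz k : a k x * b (m - k) (Tp (- k) x) = 0.
  have [hk|hk] := leqP (absz k) Na; last by rewrite ha ?mul0r.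
  by rewrite hb ?mulr0 //; lia.
by rewrite /emul (zsum_single (i0 := 0)) ?hz.
Qed.
End FiniteSupport.

Section LocallyConstant.
Variables (X : Type) (tau : topology X) (K : fieldType) (cj : K -> K) (T Tinv : X -> X).
Hypotheses (Tc : continuous tau T) (Tinvc : continuous tau Tinv).
Hypothesis cjD : forall a b, cj (a + b) = cj a + cj b.
Local Notation Tp := (Tpow T Tinv).
Local Notation lc := (@locally_constant X tau K).
Local Notation inA := (inA tau (K := K)).

Lemma lc_const (c : K) : lc (fun _ => c).
Proof. by move=> x; exists (fun _ => True); split => //; exact: open_setT. Qed.

Lemma lc_op (h : K -> K -> K) f g : lc f -> lc g -> lc (fun x => h (f x) (g x)).
Proof.
move=> hf hg x; have [U [hU [Ux fU]]] := hf x; have [V [hV [Vx gV]]] := hg x.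
exists (fun y => U y /\ V y); split; first exact: open_setI.
by split => // y [/fU -> /gV ->].
Qed.

Lemma lc_chi U : clopen tau U -> lc (chi K U).
Proof.
move=> [hU hUc] x; case hx: (U x).
  by exists (fun y => U y); split => //; split => // y hy; rewrite /chi hy hx.
exists (fun y => ~~ U y); split => //; split; first by rewrite hx.
by move=> y hy; rewrite /chi (negbTE hy) hx.
Qed.

Lemma lc_Tpow i f : lc f -> lc (fun x => f (Tp i x)).
Proof.
move=> hf x; have [U [hU [Ux fU]]] := hf (Tp i x).
exists (fun y => U (Tp i y)); split; first exact: continuous_Tpow.
by split => // y /fU.
Qed.

Lemma lc_sum m (F : 'I_m -> X -> K) : (forall k, lc (F k)) ->
  lc (fun x => \sum_(k < m) F k x).
Proof.
elim: m F => [|m IH] F hF.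
  rewrite (_ : (fun x => _) = fun _ => 0); first exact: lc_const.
  by apply: functional_extensionality => x; rewrite big_ord0.
rewrite (_ : (fun x => _) = fun x => \sum_(k < m) F (widen_ord (leqnSn m) k) x + F ord_max x).
  by apply: lc_op; [apply: IH | ].
by apply: functional_extensionality => x; rewrite big_ord_recr.
Qed.

Lemma inA_emono f i : lc f -> inA (emono f i).
Proof.
move=> hf; split.
  exists (absz i) => k hk x; rewrite /emono ifF //.
  by apply/eqP => ek; move: hk; rewrite ek ltnn.
by move=> k; rewrite /emono; case: (k == i) => //; exact: lc_const.
Qed.

Lemma inA_closed : star_subalg_closed tau cj T Tinv inA.
Proof.
split => //; split; first by apply: inA_emono; exact: lc_const.
split.
  by move=> a b [fa la] [fb lb]; split; [exact: fin_supp_eadd | move=> k; apply: lc_op].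
split.
  move=> c a [fa la]; split; first exact: fin_supp_escale.
  by move=> k; apply: lc_op => //; exact: lc_const.
split.
  move=> a b [fa la] [fb lb]; split; first exact: fin_supp_emul.
  move=> m; have [Na ha] := fa.
  rewrite (_ : emul T Tinv a b m = fun x => wsum Na (fun k => a k x * b (m - k) (Tp (- k) x))).
    by apply: lc_sum => k; apply: lc_op => //; apply: lc_Tpow.
  by apply: functional_extensionality => x; rewrite (emul_wsum T Tinv b m x ha).
move=> a [fa la]; split; first exact: fin_supp_estar.
by move=> k; apply: (lc_op (fun _ v => cj v) (lc_const 0)); apply: lc_Tpow.
Qed.
End LocallyConstant.

Section PowersOfS.
Variables (X : Type) (K : fieldType) (cj : K -> K) (T Tinv : X -> X) (E : X -> bool).
Hypotheses (TK : cancel T Tinv) (TinvK : cancel Tinv T).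
Hypotheses (cjD : forall a b, cj (a + b) = cj a + cj b)
  (cjM : forall a b, cj (a * b) = cj a * cj b) (cjK : involutive cj).
Local Notation Tp := (Tpow T Tinv).
Local Notation D := (domset T Tinv E).
Local Notation M := (@emono X K).
Local Notation chD i := (chi K (D i)).
Local Notation phi := (phi cj T Tinv E).
Let TpowD := TpowD TK TinvK.
Let TpowK := TpowK TK TinvK.
Let TpowKV := TpowKV TK TinvK.
Let domsetT := domsetT E TK TinvK.

(* s = chi_(D_1) t and s^* = chi_(D_-1) t^-1; by the cocycle identity the
   products of such monomials stay of this form, giving s^i = chi_(D_i) t^i. *)
Lemma eone_chi : eone K = M (chD 0) 0.
Proof. by apply: emono_ext => x; rewrite /chi domset0. Qed.

Lemma chi_domsetT i x : chD i (Tp i x) = chD (- i) x.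
Proof. by rewrite /chi domsetT. Qed.

Lemma emono_chi_mul a b : ((0 <= a) && (0 <= b)) || ((a <= 0) && (b <= 0)) ->
  emul T Tinv (M (chD a) a) (M (chD b) b) = M (chD (a + b)) (a + b).
Proof.
by move=> Hs; rewrite emonoM; apply: emono_ext => x; rewrite /chi domsetD // natr_andb.
Qed.

Lemma s_chi : s_elt K E = M (chD 1) 1.
Proof. by apply: emono_ext => x; rewrite /chi domset1. Qed.

Lemma s_star_chi : estar cj T Tinv (s_elt K E) = M (chD (-1)) (-1).
Proof. by rewrite emonoV //; apply: emono_ext => x; rewrite cj_bool // /chi domsetN1. Qed.

Lemma epow_s k : epow T Tinv (s_elt K E) k = M (chD k) k.
Proof.
elim: k => [|k IH]; first exact: eone_chi.
by rewrite /epow iterS -/(epow _ _ _ k) IH s_chi emono_chi_mul.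
Qed.

Lemma epow_s_star k :
  epow T Tinv (estar cj T Tinv (s_elt K E)) k = M (chD (- k%:Z)) (- k%:Z).
Proof.
elim: k => [|k IH]; first exact: eone_chi.
have hs : (-1 <= 0 :> int) && (- k%:Z <= 0) by rewrite lerN10 oppr_le0.
rewrite /epow iterS -/(epow _ _ _ k) IH s_star_chi emono_chi_mul ?hs ?orbT //.
by rewrite -add1n PoszD opprD.
Qed.

Lemma spowE i : spow cj T Tinv E i = M (chD i) i.
Proof. by case: i => k; [exact: epow_s | rewrite /spow epow_s_star NegzE]. Qed.

Lemma phiA_emono i b :
  phiA cj T Tinv E i (M b 0) = M (fun x => if D i x then b (Tp (- i) x) else 0) 0.
Proof.
rewrite /phiA !spowE emonoM addr0 emonoM addrN; apply: emono_ext => x.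
by rewrite chi_domsetT opprK /chi; case: (D i x); rewrite ?mulr1 ?mul1r ?mul0r.
Qed.

Lemma phiE i b x : phi i b x = if D i x then b (Tp (- i) x) else 0.
Proof. by rewrite /phi phiA_emono /emono eqxx. Qed.

Lemma phiA_phi i b : phiA cj T Tinv E i (M b 0) = M (phi i b) 0.
Proof. by rewrite phiA_emono; apply: emono_ext => x; rewrite phiE. Qed.

Lemma phi_fadd i f g : phi i (fadd f g) = fadd (phi i f) (phi i g).
Proof.
by apply: functional_extensionality => x; rewrite /fadd !phiE; case: (D i x); rewrite ?addr0.
Qed.

Lemma phi_fscale i c f : phi i (fscale c f) = fscale c (phi i f).
Proof.
by apply: functional_extensionality => x; rewrite /fscale !phiE; case: (D i x); rewrite ?mulr0.
Qed.

Lemma phi_fmul i f g : phi i (fmul f g) = fmul (phi i f) (phi i g).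
Proof.
by apply: functional_extensionality => x; rewrite /fmul !phiE; case: (D i x); rewrite ?mulr0.
Qed.

Lemma phi_fstar i f : phi i (fstar cj f) = fstar cj (phi i f).
Proof.
by apply: functional_extensionality => x; rewrite /fstar !phiE; case: (D i x); rewrite ?cj0.
Qed.

Lemma phi_supported i f : supported_on (D i) (phi i f).
Proof. by move=> x hx; rewrite phiE (negbTE hx). Qed.

Lemma phi0 f : phi 0 f = f.
Proof. by apply: functional_extensionality => x; rewrite phiE domset0. Qed.

Lemma phiK i f : supported_on (D i) f -> phi i (phi (- i) f) = f.
Proof.
move=> hf; apply: functional_extensionality => x.
rewrite !phiE domsetT !opprK TpowKV.
by case hx: (D i x); rewrite // hf ?hx.
Qed.

Lemma phi_comp i j f : supported_on (D (- j)) f -> supported_on (D (- i)) (phi j f) ->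
  supported_on (D (- (i + j))) f /\ phi (i + j) f = phi i (phi j f).
Proof.
move=> hj hi.
have hij : supported_on (D (- (i + j))) f.
  move=> x hx; case h1: (D (- j) x); last by rewrite hj ?h1.
  case h2: (D (- i) (Tp j x)).
    have := domsetD_sub TK TinvK h1; rewrite opprK => /(_ _ h2).
    by rewrite -opprD addrC (negbTE hx).
  by have := hi (Tp j x); rewrite h2 phiE domsetT h1 TpowK; apply.
split => //; apply: functional_extensionality => x; rewrite !phiE -TpowD.
have e : - j + - i = - (i + j) by rewrite addrC opprD.
rewrite e; case: (eqVneq (f (Tp (- (i + j)) x)) 0) => [->|hf].
  by repeat case: ifP.
have hDij : D (i + j) x.
  by apply: contraNT hf => hn; apply/eqP; apply: hij; rewrite domsetT opprK.
have hDj : D j (Tp (- i) x).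
  apply: contraNT hf => hn; apply/eqP; apply: hj.
  by rewrite -e TpowD domsetT opprK.
have hDi : D i x.
  apply: contraNT hf => hn; apply/eqP; have := hi (Tp (- i) x).
  by rewrite domsetT opprK phiE hDj -TpowD e => ->.
by rewrite hDij hDj hDi.
Qed.

Lemma fmul_phi m f g : supported_on (D m) f ->
  fmul f (phi m g) = fun x => f x * g (Tp (- m) x).
Proof.
move=> hf; apply: functional_extensionality => x; rewrite /fmul phiE.
by case hx: (D m x); rewrite // hf ?hx ?mul0r.
Qed.

(* The unital *-subalgebra B generated by the chi_Z t, and its grading by the
   B_i; only here do the partition P and the continuity of T enter. *)
Section SubalgebraB.
Variables (tau : topology X) (n : nat) (P : 'I_n -> X -> bool).
Hypotheses (Tc : continuous tau T) (Tinvc : continuous tau Tinv).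
Hypotheses (Pclo : forall j, clopen tau (P j))
  (Pdisj : forall j k x, P j x -> P k x -> j = k)
  (Pcov : forall x, ~~ E x = [exists j, P j x]).
Local Notation inB := (inB tau cj T Tinv P).
Local Notation B0 := (B0 tau cj T Tinv P).
Local Notation Bi := (Bi tau cj T Tinv E P).
Local Notation spow := (spow cj T Tinv E).

Lemma inB_inA a : inB a -> inA tau a.
Proof.
move=> h; apply: h; first exact: inA_closed.
by move=> g [j ->]; apply: inA_emono; exact: lc_chi.
Qed.

Lemma inB_one : inB (eone K).
Proof. by move=> S [_ [h1 _]] _. Qed.

Lemma inB_add a b : inB a -> inB b -> inB (eadd a b).
Proof. by move=> ha hb S hS hg; have [_ [_ [hD _]]] := hS; apply: hD; [apply: ha|apply: hb]. Qed.

Lemma inB_scale c a : inB a -> inB (escale c a).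
Proof. by move=> ha S hS hg; have [_ [_ [_ [hZ _]]]] := hS; apply: hZ; apply: ha. Qed.

Lemma inB_mul a b : inB a -> inB b -> inB (emul T Tinv a b).
Proof.
by move=> ha hb S hS hg; have [_ [_ [_ [_ [hM _]]]]] := hS; apply: hM; [apply: ha|apply: hb].
Qed.

Lemma inB_star a : inB a -> inB (estar cj T Tinv a).
Proof. by move=> ha S hS hg; have [_ [_ [_ [_ [_ hV]]]]] := hS; apply: hV; apply: ha. Qed.

Lemma inB_gen j : inB (M (chi K (P j)) 1).
Proof. by move=> S hS hg; apply: hg; exists j. Qed.

Lemma inB_zero : inB (@ezero X K).
Proof. by rewrite -(escale0 (eone K)); apply: inB_scale; exact: inB_one. Qed.

Lemma inB_sum (I : Type) (r : seq I) (F : I -> elt X K) : (forall i, inB (F i)) ->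
  inB (fun m x => \sum_(i <- r) F i m x).
Proof.
move=> hF; elim: r => [|i r IH].
  rewrite (_ : (fun m x => _) = @ezero X K); first exact: inB_zero.
  by do 2!apply: functional_extensionality => ?; rewrite big_nil.
rewrite (_ : (fun m x => _) = eadd (F i) (fun m x => \sum_(j <- r) F j m x)).
  exact: inB_add.
by do 2!apply: functional_extensionality => ?; rewrite big_cons.
Qed.

(* chi_(X \ E) = sum_Z chi_Z, since P partitions X \ E; hence s = sum_Z chi_Z t is in B. *)
Lemma chi_compl_partition x : chi K (fun x => ~~ E x) x = \sum_(j < n) chi K (P j) x.
Proof.
rewrite /chi Pcov; case: existsP => [[j hj]|hn].
  rewrite (bigD1 j) //= hj big1 ?addr0 // => k hk.
  by case hk': (P k x) => //; move/eqP: hk; case; exact: Pdisj hk' hj.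
by rewrite big1 // => k _; case hk: (P k x) => //; case: hn; exists k.
Qed.

Lemma inB_s : inB (s_elt K E).
Proof.
rewrite (_ : s_elt K E = fun m x => \sum_(j <- index_enum 'I_n) M (chi K (P j)) 1 m x).
  by apply: inB_sum => j; apply: inB_gen.
do 2!apply: functional_extensionality => ?.
by rewrite /s_elt /emono; case: ifP => _; [exact: chi_compl_partition | rewrite big1].
Qed.

Lemma inB_spow i : inB (spow i).
Proof.
have inB_epow a k : inB a -> inB (epow T Tinv a k).
  by move=> ha; elim: k => [|k IH]; [exact: inB_one | exact: inB_mul].
by case: i => k; apply: inB_epow; [exact: inB_s | apply: inB_star; exact: inB_s].
Qed.

(* B_0 is the set of f with f t^0 in B (local constancy comes for free). *)
Lemma B0E f : B0 f <-> inB (M f 0).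
Proof.
split => [[]//|h]; split => //; have [_ hl] := inB_inA h.
by have := hl 0; rewrite /emono eqxx.
Qed.

(* If f t^i is in B and f vanishes off D_i, then f t^0 = (f t^i) s^-i is in B. *)
Lemma inB_untwist i f : inB (M f i) -> supported_on (D i) f -> inB (M f 0).
Proof.
move=> hB hs; rewrite (_ : M f 0 = emul T Tinv (M f i) (spow (- i))).
  exact: inB_mul hB (inB_spow _).
rewrite spowE // emonoM addrN; apply: emono_ext => x.
by rewrite chi_domsetT // opprK supported_mul_chi.
Qed.

Lemma BiE i f : Bi i f <-> inB (M f i) /\ supported_on (D i) f.
Proof.
split => [[b [_ hb] ->]|[hB hs]].
  split; last by move=> x hx; rewrite /fmul /chi (negbTE hx) mul0r.
  rewrite (_ : M _ i = emul T Tinv (M b 0) (spow i)); first exact: inB_mul hb (inB_spow _).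
  by rewrite spowE // emonoM add0r; apply: emono_ext => x; rewrite oppr0 /fmul mulrC.
exists f; first by apply/B0E; exact: inB_untwist hB hs.
by apply: functional_extensionality => x; rewrite /fmul mulrC supported_mul_chi.
Qed.

Lemma Bi_B0 i f : Bi i f -> B0 f.
Proof. by move=> /BiE [hB hs]; apply/B0E; exact: inB_untwist hB hs. Qed.

Lemma Bi_supported i f : Bi i f -> supported_on (D i) f.
Proof. by move=> /BiE []. Qed.

Lemma Bi_of_B0 i f : B0 f -> supported_on (D i) f -> Bi i f.
Proof.
move=> hB hs; exists f => //.
by apply: functional_extensionality => x; rewrite /fmul mulrC supported_mul_chi.
Qed.

Lemma Bi_zero i : Bi i (fun _ => 0).
Proof. by apply/BiE; rewrite emono0; split => //; exact: inB_zero. Qed.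

Lemma Bi_add i f g : Bi i f -> Bi i g -> Bi i (fadd f g).
Proof.
move=> /BiE [hf sf] /BiE [hg sg]; apply/BiE; split; first by rewrite -emonoD; exact: inB_add.
by move=> x hx; rewrite /fadd sf ?sg ?addr0.
Qed.

Lemma Bi_scale i c f : Bi i f -> Bi i (fscale c f).
Proof.
move=> /BiE [hf sf]; apply/BiE; split; first by rewrite -emonoZ; exact: inB_scale.
by move=> x hx; rewrite /fscale sf ?mulr0.
Qed.

Lemma Bi_sum i m (F : 'I_m -> X -> K) : (forall k, Bi i (F k)) ->
  Bi i (fun x => \sum_(k < m) F k x).
Proof.
elim: m F => [|m IH] F hF.
  rewrite (_ : (fun x => _) = fun _ => 0); first exact: Bi_zero.
  by apply: functional_extensionality => x; rewrite big_ord0.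
rewrite (_ : (fun x => _) =
    fadd (fun x => \sum_(k < m) F (widen_ord (leqnSn m) k) x) (F ord_max)).
  by apply: Bi_add; [apply: IH | ].
by apply: functional_extensionality => x; rewrite /fadd big_ord_recr.
Qed.

Lemma Bi_mul i j f g : Bi i f -> Bi j g -> Bi (i + j) (fun x => f x * g (Tp (- i) x)).
Proof.
move=> /BiE [hf sf] /BiE [hg sg]; apply/BiE; split; first by rewrite -emonoM; exact: inB_mul.
move=> x hx; case hi: (D i x); last by rewrite sf ?hi ?mul0r.
case hj: (D j (Tp (- i) x)); last by rewrite sg ?hj ?mulr0.
by move: hx; rewrite (domsetD_sub TK TinvK hi hj).
Qed.

Lemma Bi_star i f : Bi (- i) f -> Bi i (fun x => cj (f (Tp (- i) x))).
Proof.
move=> /BiE [hf sf]; apply/BiE; split; first by have := inB_star hf; rewrite emonoV // opprK.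
by move=> x hx; rewrite sf ?cj0 // (domsetT (- i)) opprK.
Qed.

(* B_i is a self-adjoint ideal of B_0: (a t^0)(f t^i) = (a f) t^i gives the ideal
   property, and ( chi_(D_i) b )^* = chi_(D_i) b^* with b^* in B_0. *)
Lemma Bi_sa_ideal i : sa_ideal cj B0 (Bi i).
Proof.
have Bi_mulB0 a f : B0 a -> Bi i f -> Bi i (fmul a f).
  move=> /B0E ha /BiE [hf sf]; apply/BiE; split; last by move=> x hx; rewrite /fmul sf ?mulr0.
  by have := inB_mul ha hf; rewrite emonoM add0r oppr0.
split; first exact: Bi_B0.
split; first exact: Bi_zero.
split; first by move=> f g; apply: Bi_add.
split; first by move=> c f; apply: Bi_scale.
split.
  move=> a f ha hf; split; first exact: Bi_mulB0.
  have -> : fmul f a = fmul a f.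
    by apply: functional_extensionality => x; rewrite /fmul mulrC.
  exact: Bi_mulB0.
move=> f [b [hl hb] ->]; exists (fstar cj b).
  by apply/B0E; have := inB_star hb; rewrite emonoV // oppr0.
by apply: functional_extensionality => x; rewrite /fstar /fmul cjM cj_bool.
Qed.

Lemma phi_into i v : Bi (- i) v -> Bi i (phi i v).
Proof.
move=> hv; apply: Bi_of_B0; last exact: phi_supported.
apply/B0E; rewrite -phiA_phi; apply: inB_mul; last exact: inB_spow.
by apply: inB_mul; [exact: inB_spow | exact/B0E/(Bi_B0 hv)].
Qed.

Lemma phi_star_iso i : star_iso (fun_ops X cj) (fun_ops X cj) (Bi (- i)) (Bi i) (phi i).
Proof.
have phiKV v : Bi (- i) v -> phi (- i) (phi i v) = v.
  by move=> hv; rewrite -{2}[i]opprK phiK //; exact: Bi_supported hv.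
split; first exact: phi_into.
split; first by move=> v1 v2 h1 h2 e; rewrite -(phiKV _ h1) -(phiKV _ h2) e.
split.
  move=> w hw; exists (phi (- i) w); first by apply: phi_into; rewrite opprK.
  by rewrite phiK //; exact: Bi_supported hw.
split; first by move=> v1 v2 _ _; exact: phi_fadd.
split; first by move=> c v _; exact: phi_fscale.
split; first by move=> v1 v2 _ _; exact: phi_fmul.
by move=> v _; exact: phi_fstar.
Qed.

Lemma phi_partial_action : partial_action cj B0 Bi phi.
Proof.
split.
  move=> f; split; first exact: Bi_B0.
  by move=> hf; apply: Bi_of_B0 => // x; rewrite domset0.
split; first exact: Bi_sa_ideal.
split; first exact: phi_star_iso.
split; first by move=> f _; exact: phi0.
move=> i j f hj hi; have [hij ->] := phi_comp (Bi_supported hj) (Bi_supported hi).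
by split => //; apply: Bi_of_B0 hij; exact: Bi_B0 hj.
Qed.

Lemma Bi_gen j : Bi 1 (chi K (P j)).
Proof.
apply/BiE; split; first exact: inB_gen.
move=> x; rewrite domset1 // negbK /chi => hE; case hP: (P j x) => //.
by move: (Pcov x); rewrite hE /=; move/esym/existsP => []; exists j.
Qed.

Lemma inCP_emono i f : Bi i f -> inCP Bi (M f i).
Proof.
move=> h; split; first by have [] := inA_emono i (Bi_B0 h).1.
by move=> k; rewrite /emono; case: eqP => [->|_]; [exact: h | exact: Bi_zero].
Qed.

Lemma inCP_closed : star_subalg_closed tau cj T Tinv (inCP Bi).
Proof.
split; first by move=> a [ha hb]; split => // i; exact: (Bi_B0 (hb i)).1.
split.
  by apply: inCP_emono; apply: Bi_of_B0 => [|x]; [apply/B0E; exact: inB_one | rewrite domset0].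
split.
  by move=> a b [fa la] [fb lb]; split; [exact: fin_supp_eadd | move=> k; apply: Bi_add].
split.
  by move=> c a [fa la]; split; [exact: fin_supp_escale | move=> k; apply: Bi_scale].
split.
  move=> a b [fa la] [fb lb]; split; first exact: fin_supp_emul.
  move=> m; have [Na ha] := fa.
  rewrite (_ : emul T Tinv a b m = fun x => wsum Na (fun k => a k x * b (m - k) (Tp (- k) x))).
    apply: Bi_sum => k; have := Bi_mul (la (k%:Z - Na%:Z)) (lb (m - (k%:Z - Na%:Z))).
    by rewrite addrC subrK.
  by apply: functional_extensionality => x; rewrite (emul_wsum T Tinv b m x ha).
by move=> a [fa la]; split; [exact: fin_supp_estar | move=> k; apply: Bi_star].
Qed.

Lemma inB_inCP a : inB a <-> inCP Bi a.
Proof.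
split.
  move=> h; apply: h; first exact: inCP_closed.
  by move=> g [j ->]; apply: inCP_emono; exact: Bi_gen.
move=> [[N hN] hb]; rewrite (elt_monomial_sum hN).
by apply: inB_sum => k; have [] := (BiE _ _).1 (hb (k%:Z - N%:Z)).
Qed.

Lemma emul_spow i b : Bi i b -> emul T Tinv (M b 0) (spow i) = M b i.
Proof.
move=> h; rewrite spowE // emonoM add0r; apply: emono_ext => x.
by rewrite oppr0 supported_mul_chi //; exact: Bi_supported h.
Qed.

(* Psi is the identity on coefficient families; it intertwines the products and
   involutions because elements of B_i vanish off D_i. *)
Lemma Psi_star_iso :
  star_iso (cp_ops cj phi) (elt_ops cj T Tinv) (inCP Bi) inB (@Psi X K).
Proof.
split; first by move=> a /inB_inCP.
split; first by [].
split; first by move=> w /inB_inCP hw; exists w.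
split; first by [].
split; first by [].
split.
  move=> v1 v2 [_ h1] _; do 2!apply: functional_extensionality => ?.
  rewrite /Psi /cp_mul /emul /=; congr zsum; apply: functional_extensionality => m.
  rewrite phi_fmul phiK; last exact: Bi_supported (h1 m).
  by rewrite fmul_phi //; exact: Bi_supported (h1 m).
move=> v [_ h1]; apply: functional_extensionality => k; apply: functional_extensionality => x.
rewrite /= /Psi /cp_star /estar phiE /fstar.
by case hD: (D k x); rewrite // (Bi_supported (h1 (- k))) ?cj0 // domsetT opprK hD.
Qed.
End SubalgebraB.
End PowersOfS.

Theorem proposition3p7 (X : Type) (tau : topology X) (K : fieldType) (cj : K -> K)
    (T Tinv : X -> X) (E : X -> bool) (n : nat) (P : 'I_n -> X -> bool) :
  compact_space tau -> totally_disconnected tau -> metrizable tau ->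
  field_involution cj -> homeomorphism tau T Tinv ->
  clopen tau E -> (exists x, E x) -> is_partition tau E P ->
  (* each B_i is a self-adjoint ideal of B_0 *)
  (forall i : int, sa_ideal cj (B0 tau cj T Tinv P) (Bi tau cj T Tinv E P i)) /\
  (* phi_i : B_-i -> B_i is a *-isomorphism *)
  (forall i : int, star_iso (fun_ops X cj) (fun_ops X cj)
       (Bi tau cj T Tinv E P (- i)) (Bi tau cj T Tinv E P i) (phi cj T Tinv E i)) /\
  (* phi_i(b) = s^i b s^-i (in particular s^i b s^-i lies in C_K(X)) *)
  (forall (i : int) (b : X -> K), Bi tau cj T Tinv E P (- i) b ->
       phiA cj T Tinv E i (emono b 0) = emono (phi cj T Tinv E i b) 0) /\
  (* ({B_i}, {phi_i}) is a partial action of Z on B_0 *)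
  partial_action cj (B0 tau cj T Tinv P) (Bi tau cj T Tinv E P) (phi cj T Tinv E) /\
  (* B = (+)_i B_i t^i *)
  (forall a : elt X K, inB tau cj T Tinv P a <-> inCP (Bi tau cj T Tinv E P) a) /\
  (* b_i s^i = b_i t^i for b_i in B_i *)
  (forall (i : int) (b : X -> K), Bi tau cj T Tinv E P i b ->
       emul T Tinv (emono b 0) (spow cj T Tinv E i) = emono b i) /\
  (* Psi : B_0 x|_phi Z -> B is a *-isomorphism *)
  star_iso (cp_ops cj (phi cj T Tinv E)) (elt_ops cj T Tinv)
       (inCP (Bi tau cj T Tinv E P)) (inB tau cj T Tinv P) (@Psi X K).
Proof.
move=> _ _ _ [cjD [cjM cjK]] [TK [TinvK [Tc Tinvc]]] _ _ [Pclo [_ [Pdisj Pcov]]].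
split; first by move=> i; exact: Bi_sa_ideal.
split; first by move=> i; exact: phi_star_iso.
split; first by move=> i b _; exact: phiA_phi.
split; first exact: phi_partial_action.
split; first by move=> a; exact: inB_inCP.
split; first by move=> i b; exact: emul_spow.
exact: Psi_star_iso.
Qed.
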